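(* Let $\mathcal{X},\mathcal{Y}$ be topological spaces with $\mathcal{X}$ connected and simply connected, let $\phi:\mathcal{X}\to\mathbb{R}^m$ be continuous and injective, let $\rho:\mathbb{R}^n\to\mathcal{Y}$ be a continuous surjection admitting a section (a continuous $s:\mathcal{Y}\to\mathbb{R}^n$ with $\rho\circ s=1_{\mathcal{Y}}$), and let $\mathcal{F}$ be dense in $C(\mathbb{R}^m,\mathbb{R}^n)$ for the topology of uniform convergence on compacts. Then $\{\rho\circ f\circ\phi: f\in\mathcal{F}\}$ is dense in $C(\mathcal{X},\mathcal{Y})$ equipped with the compact-open topology.
   Context: The compact-open topology on $C(\mathcal{X},\mathcal{Y})$ is generated by the sets $\{f: f(K)\subseteq O\}$ with $K\subseteq\mathcal{X}$ compact and $O\subseteq\mathcal{Y}$ open. *)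

From HB Require Import structures.
From mathcomp Require Import all_boot all_order all_algebra.
From mathcomp Require Import all_classical all_reals all_analysis.
Set Implicit Arguments. Unset Strict Implicit. Unset Printing Implicit Defensive.
Import Order.TTheory GRing.Theory Num.Theory.
Import numFieldNormedType.Exports.
Local Open Scope classical_set_scope.
Local Open Scope ring_scope.

Definition unit_itv (R : realType) : set R := `[0, 1]%classic.
Arguments unit_itv R : clear implicits.

Definition is_path (R : realType) (X : topologicalType) (g : R -> X) : Prop :=
  {within unit_itv R, continuous g}.

Definition path_connected (R : realType) (X : topologicalType) : Prop :=
  forall x y : X, exists g : R -> X, is_path g /\ g 0 = x /\ g 1 = y.

Definition simply_connected (R : realType) (X : topologicalType) : Prop :=
  path_connected R X /\
  forall g : R -> X, is_path g -> g 0 = g 1 ->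
    exists H : R * R -> X,
      {within unit_itv R `*` unit_itv R, continuous H} /\
      (forall t, unit_itv R t -> H (t, 0) = g t /\ H (t, 1) = g 0) /\
      (forall u, unit_itv R u -> H (0, u) = g 0 /\ H (1, u) = g 0).

From HB Require Import structures.
From mathcomp Require Import all_boot all_order all_algebra.
From mathcomp Require Import all_classical all_reals all_analysis.
Import Order.TTheory GRing.Theory Num.Theory.
Import numFieldNormedType.Exports.
Local Open Scope classical_set_scope.
Local Open Scope ring_scope.

(* Write g = rho \o (s \o g).  On a compact K the injection phi is a
   homeomorphism onto phi(K), so by Tietze's theorem s \o g agrees on K with
   e \o phi for some continuous e : R^m -> R^n; approximating e uniformly on
   the compact phi(K) by members of F puts s \o g in the closure of
   {f \o phi | f in F} for compact convergence.  Postcomposition with rho is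
   continuous at continuous maps from compact convergence to the compact-open
   topology, so it carries this closure onto the claim. *)

Lemma inj_compact_factor {X Z : topologicalType} {W : ptopologicalType}
    {phi : X -> Z} {h : X -> W} {K : set X} :
  hausdorff_space Z -> continuous phi -> injective phi -> continuous h ->
  compact K ->
  exists2 u : Z -> W, {within phi @` K, continuous u} &
    forall x, K x -> u (phi x) = h x.
Proof.
move=> hZ cphi iphi ch cK.
pose u z := get (h @` (K `&` phi @^-1` [set z])).
have uK x : K x -> u (phi x) = h x.
  move=> Kx; have [|y [_ /iphi ->] //] :=
    @getPex _ (h @` (K `&` phi @^-1` [set phi x])).
  by exists (h x), x.
(* phi maps compact subsets of K onto closed sets, so u has closed preimages. *)
exists u => //; apply/continuous_closedP => C clC; apply/closed_subspaceP.
exists (phi @` (K `&` h @^-1` C)).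
  apply: compact_closed => //; apply: continuous_compact.
    exact: continuous_subspaceT.
  exact: compact_closedI (proj1 (continuous_closedP _) ch _ clC).
apply/seteqP; split => z.
  case=> -[x [Kx Cx] <-] _; split; last by exists x.
  by change (C (u (phi x))); rewrite uK.
case=> Cz [x Kx xz]; change (C (u z)) in Cz; split; last by exists x.
by exists x => //; split; rewrite // /preimage /= -uK // xz.
Qed.

Lemma compact_continuous_extension {X : topologicalType} {R : realType}
    {A : set X} {f : X -> R} :
  normal_space X -> closed A -> compact A -> {within A, continuous f} ->
  exists2 g : X -> R, continuous g & forall x, A x -> g x = f x.
Proof.
move=> nX clA cA cf.
have [M [_ fAM]] := compact_bounded (continuous_compact cf cA).
have M1 : 0 < `|M| + 1 by rewrite ltr_wpDl.
have [x Ax|g [fg cg _]] := continuous_bounded_extension nX clA M1 cf.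
  by apply: fAM; [rewrite (le_lt_trans (ler_norm M)) ?ltrDl | exists x].
by exists g => // x Ax; rewrite fg //; exact/mem_set.
Qed.

Lemma continuous_row {T : topologicalType} {R : numFieldType} {n}
    (f : 'I_n -> T -> R) :
  (forall j, continuous (f j)) -> continuous (fun x => \row_j f j x).
Proof.
move=> cf x; apply/(cvg_ballP (FF := nbhs_filter x)) => e e0.
apply: filterS (filter_forall _ (fun j => cvg_ball (cf j x) e0)) => z fze.
by split => // i j; rewrite !mxE.
Qed.

Lemma compact_continuous_row_extension {X : topologicalType} {R : realType} {n}
    {A : set X} {u : X -> 'rV[R]_n} :
  normal_space X -> closed A -> compact A -> {within A, continuous u} ->
  exists2 e : X -> 'rV[R]_n, continuous e & forall x, A x -> e x = u x.
Proof.
move=> nX clA cA cu.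
have /choice[f fP] j : exists f : X -> R,
    continuous f /\ forall x, A x -> f x = u x ord0 j.
  have cuj : {within A, continuous (fun x => u x ord0 j)}.
    move=> x; exact: continuous_comp (cu x) (@coord_continuous R 1 n ord0 j _).
  by have [f ? ?] := compact_continuous_extension nX clA cA cuj; exists f.
exists (fun x => \row_j f j x).
  by apply: continuous_row => j; case: (fP j).
by move=> x Ax; apply/rowP => j; rewrite mxE (proj2 (fP j)).
Qed.

Lemma inj_compact_extension {X Z : topologicalType} {R : realType} {n : nat}
    {phi : X -> Z} {h : X -> 'rV[R]_n} {K : set X} :
  hausdorff_space Z -> normal_space Z ->
  continuous phi -> injective phi -> continuous h -> compact K ->
  exists2 e : Z -> 'rV[R]_n, continuous e & forall x, K x -> e (phi x) = h x.
Proof.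
move=> hZ nZ cphi iphi ch cK.
have [u cu uK] := inj_compact_factor hZ cphi iphi ch cK.
have cphiK : compact (phi @` K).
  by apply: continuous_compact => //; exact: continuous_subspaceT.
have [e ce eu] :=
  compact_continuous_row_extension nZ (compact_closed hZ cphiK) cphiK cu.
by exists e => // x Kx; rewrite eu ?uK //; exists x.
Qed.

Lemma fam_compact_closureP {U : topologicalType} {V : uniformType}
    (A : set (U -> V)) (h : U -> V) :
  closure (A : set {family compact, U -> V}) h <->
  forall K E, compact K -> entourage E ->
    exists2 g, A g & forall x, K x -> E (h x, g x).
Proof.
split=> [clAh K E cK entE | approxA B hB].
  by have [g [Ag hEg]] := clAh _ (fam_nbhs h entE cK); exists g.
pose G := filter_from [set KE | compact KE.1 /\ @entourage V KE.2]
  (fun KE => [set g | forall x, KE.1 x -> KE.2 (h x, g x)]).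
have FG : Filter G.
  apply: filter_from_filter.
    by exists (set0, setT); split; [exact: compact0 | exact: entourageT].
  move=> [K1 E1] [K2 E2] [cK1 entE1] [cK2 entE2].
  exists (K1 `|` K2, E1 `&` E2).
    by split; [exact: compactU | exact: filterI].
  move=> g /= hEg; split=> x Kx.
    by case: (hEg x (or_introl Kx)).
  by case: (hEg x (or_intror Kx)).
have /(_ B hB) : G --> (h : {family compact, U -> V}).
  apply/fam_cvgP => K cK P /uniform_nbhs[E [entE EP]].
  by exists (K, E).
case=> -[K E] [cK entE] KEB; have [g Ag hEg] := approxA K E cK entE.
by exists g; split=> //; exact: KEB.
Qed.

Lemma continuous_comp_compact_open {U : topologicalType} {V : uniformType}
    {Y : topologicalType} (rho : V -> Y) (h : U -> V) :
  continuous rho -> continuous h ->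
  {for h, continuous
    (fun k : {family compact, U -> V} => rho \o k : {compact-open, U -> Y})}.
Proof.
move=> crho ch; rewrite /prop_for; apply/compact_open_cvgP.
  exact: fmap_filter (nbhs_filter (h : {family compact, U -> V})).
move=> K O cK oO rhoKO.
have hKO : h @` K `<=` rho @^-1` O.
  by move=> _ [x Kx <-]; apply: rhoKO; exists x.
have := fam_compact_nbhs (proj1 (continuousP _) crho _ oO) hKO cK ch.
by apply: filterS => k kKO _ [x Kx <-]; exact: kKO.
Qed.

Lemma closure_image_for {T U : topologicalType} (f : T -> U) (A : set T)
    (p : T) :
  {for p, continuous f} -> closure A p -> closure (f @` A) (f p).
Proof.
by move=> cf clAp B /cf /clAp[q [Aq Bfq]]; exists (f q); split; [exists q |].
Qed.

Lemma compact_closure_comp_inj {X Z : topologicalType} {R : realType} {n : nat}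
    {phi : X -> Z} {F : set (Z -> 'rV[R]_n)} {h : X -> 'rV[R]_n} :
  hausdorff_space Z -> normal_space Z -> continuous phi -> injective phi ->
  (forall f, continuous f ->
     closure (F : set {family compact, Z -> 'rV[R]_n}) f) ->
  continuous h ->
  closure ([set f \o phi | f in F] : set {family compact, X -> 'rV[R]_n}) h.
Proof.
move=> hZ nZ cphi iphi denseF ch; apply/fam_compact_closureP => K E cK entE.
have [e ce ephi] := inj_compact_extension hZ nZ cphi iphi ch cK.
have cphiK : compact (phi @` K).
  by apply: continuous_compact => //; exact: continuous_subspaceT.
have [f Ff eEf] := (fam_compact_closureP F e).1 (denseF e ce) _ _ cphiK entE.
exists (f \o phi); first by exists f.
by move=> x Kx; rewrite -ephi //; apply: eEf; exists x.
Qed.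

Theorem mainTheorem4 (R : realType) (m n : nat)
  (X Y : topologicalType)
  (phi : X -> 'rV[R]_m) (rho : 'rV[R]_n -> Y) (s : Y -> 'rV[R]_n)
  (F : set ('rV[R]_m -> 'rV[R]_n)) :
  connected [set: X] ->
  simply_connected R X ->
  continuous phi -> injective phi ->
  continuous rho -> (forall y : Y, exists x, rho x = y) ->
  continuous s -> rho \o s = id ->
  (forall f, F f -> continuous f) ->
  (forall f : 'rV[R]_m -> 'rV[R]_n, continuous f ->
     closure (F : set {family compact, 'rV[R]_m -> 'rV[R]_n}) f) ->
  forall g : X -> Y, continuous g ->
    closure ([set rho \o f \o phi | f in F] : set {compact-open, X -> Y}) g.
Proof.
move=> _ _ cphi iphi crho _ cs rhos _ denseF g cg.
have csg : continuous (s \o g).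
  by move=> x; exact: continuous_comp (cg x) (cs _).
have -> : [set rho \o f \o phi | f in F] = comp rho @` [set f \o phi | f in F].
  by rewrite image_comp.
have <- : rho \o (s \o g) = g by rewrite compA rhos.
apply: (@closure_image_for _ _
  (fun k : {family compact, X -> 'rV[R]_n} =>
     rho \o k : {compact-open, X -> Y})).
  exact: continuous_comp_compact_open.
exact: compact_closure_comp_inj (@norm_hausdorff R _) pseudometric_normal
  cphi iphi denseF csg.
Qed.
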